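(* Let $n\ge 2$ and $N\ge 2$ be integers, and let $C=\{\boldsymbol{x}_1,\ldots,\boldsymbol{x}_N\}\subset\mathbb{S}^{n-1}$ be a set of $N$ distinct points on the unit sphere of $\mathbb{R}^n$. Put $$d_C:=\min_{1\le i<j\le N}\|\boldsymbol{x}_i-\boldsymbol{x}_j\|_2,\qquad t_C:=\max_{1\le i<j\le N}\boldsymbol{x}_i\cdot\boldsymbol{x}_j .$$ Suppose that: (i) there exist a nonnegative integer $k_1$ and a function $f\in P(k_1,t_C,n)$ such that $N=f^{\#}$; (ii) there exists $t_2\in[-1,t_C)$ such that $f(t)\neq 0$ for all $t\in(t_2,t_C)$; (iii) there exist a nonnegative integer $K_2$ and a function $g\in P(K_2,t_2,n)$ such that $N>g^{\#}$. Then $C$ is a solution of the Tammes problem for $n$ and $N$, that is, $$d_{n,N}=d_C,$$ where $d_{n,N}:=\max\left\{\min_{1\le i<j\le N}\|\boldsymbol{y}_i-\boldsymbol{y}_j\|_2 : \boldsymbol{y}_1,\ldots,\boldsymbol{y}_N\in\mathbb{S}^{n-1}\right\}$.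
   Context: $\mathbb{S}^{n-1}$ denotes the unit sphere in $\mathbb{R}^n$ and $\boldsymbol{x}\cdot\boldsymbol{y}$ the standard inner product. For fixed $n$, the Gegenbauer polynomials $P_k^{(n)}$ are defined by $P_0^{(n)}(t)=1$, $P_1^{(n)}(t)=t$, and for $k\ge 1$ $$P_{k+1}^{(n)}(t)=\frac{(2k+n-2)\,t\,P_k^{(n)}(t)-k\,P_{k-1}^{(n)}(t)}{k+n-2}.$$ For an integer $k\ge 0$ and $\tau\in[-1,1)$, the set $P(k,\tau,n)$ consists of all functions $f$ such that (a) $f(t)=\sum_{i=0}^{k}c_iP_i^{(n)}(t)$ with real coefficients satisfying $c_0>0$ and $c_i\ge 0$ for $i=1,\ldots,k$, and (b) $f(t)\le 0$ for all $t\in[-1,\tau]$. For such $f$ (with this expansion), $f^{\#}:=f(1)/c_0$. *)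

From HB Require Import structures.
From mathcomp Require Import all_boot all_order all_algebra.
From mathcomp Require Import classical_sets boolp reals.
Set Implicit Arguments. Unset Strict Implicit. Unset Printing Implicit Defensive.
Import Order.TTheory GRing.Theory Num.Theory.
Local Open Scope ring_scope.
Local Open Scope classical_set_scope.

Section Defs.
Variable R : realType.

Definition dotp (n : nat) (u v : 'rV[R]_n) : R := \sum_(j < n) u 0 j * v 0 j.

Definition dist2 (n : nat) (u v : 'rV[R]_n) : R := Num.sqrt (dotp (u - v) (u - v)).

Definition on_sphere (n : nat) (u : 'rV[R]_n) : Prop := dotp u u = 1.

Definition min_dist (n N : nat) (x : 'I_N -> 'rV[R]_n) : R :=
  inf [set r | exists i j : 'I_N, (i < j)%N /\ r = dist2 (x i) (x j)].

Definition max_inner (n N : nat) (x : 'I_N -> 'rV[R]_n) : R :=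
  sup [set r | exists i j : 'I_N, (i < j)%N /\ r = dotp (x i) (x j)].

Definition tammes_d (n N : nat) : R :=
  sup [set r | exists y : 'I_N -> 'rV[R]_n, (forall i, on_sphere (y i)) /\ r = min_dist y].

(* Gegenbauer polynomials: gegen_pair n k t = (P_k^{(n)}(t), P_{k+1}^{(n)}(t)) *)
Fixpoint gegen_pair (n k : nat) (t : R) : R * R :=
  match k with
  | 0 => (1, t)
  | k'.+1 =>
      let: (a, b) := gegen_pair n k' t in
      (b, (((2 * k'.+1)%:R + n%:R - 2) * t * b - (k'.+1)%:R * a)
           / ((k'.+1)%:R + n%:R - 2))
  end.

Definition gegen (n k : nat) (t : R) : R := (gegen_pair n k t).1.

Definition gegen_sum (n k : nat) (c : nat -> R) (t : R) : R :=
  \sum_(i < k.+1) c i * gegen n i t.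

Definition inP (k : nat) (tau : R) (n : nat) (c : nat -> R) : Prop :=
  [/\ -1 <= tau < 1,
      0 < c 0%N,
      (forall i : nat, (1 <= i <= k)%N -> 0 <= c i)
    & (forall t : R, -1 <= t <= tau -> gegen_sum n k c t <= 0)].

Definition fsharp (n k : nat) (c : nat -> R) : R := gegen_sum n k c 1 / c 0%N.

End Defs.

From HB Require Import structures.
From mathcomp Require Import all_boot all_order all_algebra.
From mathcomp Require Import classical_sets boolp reals.
From mathcomp Require Import mpoly.
From mathcomp Require Import ring lra zify.
Set Implicit Arguments.
Unset Strict Implicit.
Unset Printing Implicit Defensive.
Import Order.TTheory GRing.Theory Num.Theory.
Local Open Scope ring_scope.

(* Delsarte's linear programming argument.  For unit vectors y_1, ..., y_N and
   f = sum_i c_i P_i with c_i >= 0 (i >= 1), positive semidefiniteness of the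
   Gegenbauer kernels gives sum_{i,j} f(y_i.y_j) >= c_0 N^2, that is
   sum_{i<>j} f(y_i.y_j) >= N (N c_0 - f(1)).  If some configuration had all its
   inner products below t_C, f would be <= 0 at all of them, and N = f^# forces
   every off-diagonal term f(y_i.y_j) to vanish; by (ii) all inner products are
   then <= t_2, so g <= 0 at all of them and N <= g^#, contradicting (iii).  Hence
   every configuration has two points at distance <= sqrt(2 - 2 t_C) <= d_C.

   Positive semidefiniteness: on the sphere, w |-> P_k(u.w) is the restriction of
   a harmonic polynomial Z_u, homogeneous of degree k, obtained by homogenising
   the three-term recurrence.  For the Fischer inner product
   [p, q] = sum over words i_1..i_k of (d_i1..d_ik p)(0) (d_i1..d_ik q)(0),
   multiples of |x|^2 are orthogonal to harmonic polynomials and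
   [(u.x)^k, q] = (k!)^2 q(u).  As Z_u = c (u.x)^k modulo |x|^2 with c > 0
   independent of u, [Z_u, Z_w] = c (k!)^2 P_k(u.w), so sum_{i,j} P_k(y_i.y_j)
   is a positive multiple of [sum_i Z_(y_i), sum_i Z_(y_i)] >= 0. *)

Lemma sum_delta (R : pzSemiRingType) (I : finType) (i : I) (F : I -> R) :
  \sum_j (i == j)%:R * F j = F i.
Proof.
rewrite (bigD1 i) //= eqxx mul1r big1 ?addr0 // => j /negbTE.
by rewrite eq_sym => ->; rewrite mul0r.
Qed.

Lemma sum_deltar (R : pzSemiRingType) (I : finType) (i : I) (F : I -> R) :
  \sum_j F j * (j == i)%:R = F i.
Proof.
rewrite (bigD1 i) //= eqxx mulr1 big1 ?addr0 // => j /negbTE ->.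
by rewrite mulr0.
Qed.

Definition vderiv {R : comNzRingType} {n : nat} (a : 'I_n -> {mpoly R[n]})
  (p : {mpoly R[n]}) : {mpoly R[n]} := \sum_i a i * p^`M(i).
Notation euler := (vderiv (fun i => 'X_i)).
Notation dirderiv v := (vderiv (fun i => (v i)%:MP)).

Section DifferentialOperators.
Variables (R : comNzRingType) (n : nat).
Local Notation P := {mpoly R[n]}.
Implicit Types (a : 'I_n -> P) (v w : 'I_n -> R) (p q : P).

Definition linf (v : 'I_n -> R) : P := \sum_i (v i)%:MP * 'X_i.
Definition sqnorm : P := \sum_i 'X_i * 'X_i.
Definition laplacian (p : P) : P := \sum_i p^`M(i)^`M(i).

Lemma mderivXU i j : ('X_i : P)^`M(j) = (i == j)%:R.
Proof.
rewrite mderivX mnm1E; case: eqP => [->|_]; last by rewrite scale0r.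
have -> : (U_(j) - U_(j))%MM = 0%MM.
  by apply/mnmP => l; rewrite mnmBE subnn mnm0E.
by rewrite mpolyX0 scale1r.
Qed.

Lemma mderiv1 i : (1 : P)^`M(i) = 0.
Proof. by rewrite -mpolyC1 mderivC. Qed.

Lemma mderiv_linf v j : (linf v)^`M(j) = (v j)%:MP.
Proof.
rewrite raddf_sum /=.
under eq_bigr => i _ do rewrite mderiv_mulC mderivXU.
exact: sum_deltar.
Qed.

Lemma mderiv_sqnorm j : sqnorm^`M(j) = 2%:R * 'X_j.
Proof.
rewrite raddf_sum /=.
under eq_bigr => i _ do rewrite mderivM mderivXU [_ * 'X_i]mulrC -mulr2n.
by rewrite sumrMnl sum_deltar mulr_natl.
Qed.

Lemma mderiv_exp i (q : P) m : (q ^+ m.+1)^`M(i) = m.+1%:R * (q ^+ m * q^`M(i)).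
Proof.
elim: m => [|m IH]; first by rewrite expr1 expr0; ring.
rewrite exprS mderivM IH !exprS; ring.
Qed.

Lemma vderivD a : {morph vderiv a : p q / p + q}.
Proof.
by move=> p q; rewrite /vderiv -big_split; apply: eq_bigr => i _; rewrite mderivD mulrDr.
Qed.

Lemma vderivN a : {morph vderiv a : p / - p}.
Proof.
by move=> p; rewrite /vderiv -sumrN; apply: eq_bigr => i _; rewrite mderivN mulrN.
Qed.

Lemma vderiv_mulC a c p : vderiv a (c%:MP * p) = c%:MP * vderiv a p.
Proof.
by rewrite /vderiv mulr_sumr; apply: eq_bigr => i _; rewrite mderiv_mulC mulrCA.
Qed.

Lemma vderivM a p q : vderiv a (p * q) = vderiv a p * q + p * vderiv a q.
Proof.
rewrite /vderiv mulr_suml mulr_sumr -big_split; apply: eq_bigr => i _ /=.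
rewrite mderivM; ring.
Qed.

Lemma vderiv1 a : vderiv a 1 = 0.
Proof. by rewrite /vderiv big1 // => i _; rewrite mderiv1 mulr0. Qed.

Lemma vderiv_linf a v : vderiv a (linf v) = \sum_i (v i)%:MP * a i.
Proof. by apply: eq_bigr => i _; rewrite mderiv_linf mulrC. Qed.

Lemma vderiv_sqnorm a : vderiv a sqnorm = 2%:R * \sum_i a i * 'X_i.
Proof.
by rewrite /vderiv mulr_sumr; apply: eq_bigr => i _; rewrite mderiv_sqnorm mulrCA.
Qed.

Lemma meval_linf v w : (linf v).@[w] = \sum_i v i * w i.
Proof.
by rewrite /linf raddf_sum; apply: eq_bigr => i _ /=; rewrite mevalM mevalC mevalXU.
Qed.

Lemma meval_sqnorm w : sqnorm.@[w] = \sum_i w i * w i.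
Proof.
by rewrite /sqnorm raddf_sum; apply: eq_bigr => i _ /=; rewrite mevalM mevalXU.
Qed.

Lemma euler_linf v : euler (linf v) = linf v.
Proof. by rewrite vderiv_linf. Qed.

Lemma euler_sqnorm : euler sqnorm = 2%:R * sqnorm.
Proof. by rewrite vderiv_sqnorm. Qed.

Lemma dirderiv_linf v w : dirderiv v (linf w) = (\sum_i v i * w i)%:MP.
Proof.
by rewrite vderiv_linf raddf_sum; apply: eq_bigr => i _; rewrite -rmorphM mulrC.
Qed.

Lemma dirderiv_sqnorm v : dirderiv v sqnorm = 2%:R * linf v.
Proof. by rewrite vderiv_sqnorm. Qed.

Lemma laplacianD : {morph laplacian : p q / p + q}.
Proof.
by move=> p q; rewrite /laplacian -big_split; apply: eq_bigr => i _; rewrite !mderivD.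
Qed.

Lemma laplacianN : {morph laplacian : p / - p}.
Proof.
by move=> p; rewrite /laplacian -sumrN; apply: eq_bigr => i _; rewrite !mderivN.
Qed.

Lemma laplacian_mulC c p : laplacian (c%:MP * p) = c%:MP * laplacian p.
Proof.
by rewrite /laplacian mulr_sumr; apply: eq_bigr => i _; rewrite !mderiv_mulC.
Qed.

Lemma laplacianM p q :
  laplacian (p * q) =
    laplacian p * q + 2%:R * (\sum_i p^`M(i) * q^`M(i)) + p * laplacian q.
Proof.
rewrite /laplacian mulr_suml mulr_sumr [in X in _ + X]mulr_sumr -!big_split.
apply: eq_bigr => i _ /=.
rewrite !mderivM mderivD !mderivM; ring.
Qed.

Lemma laplacian1 : laplacian 1 = 0.
Proof. by rewrite /laplacian big1 // => i _; rewrite !mderiv1 mderiv0. Qed.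

Lemma laplacian_linf v : laplacian (linf v) = 0.
Proof. by rewrite /laplacian big1 // => i _; rewrite mderiv_linf mderivC. Qed.

Lemma laplacian_sqnorm : laplacian sqnorm = (2 * n)%:R.
Proof.
rewrite /laplacian; under eq_bigr => i _ do
  rewrite mderiv_sqnorm -mpolyC_nat mderiv_mulC mderivXU eqxx mulr1 mpolyC_nat.
by rewrite sumr_const card_ord natrM mulr_natr.
Qed.

Lemma laplacian_linfM v p :
  laplacian (linf v * p) = 2%:R * dirderiv v p + linf v * laplacian p.
Proof.
rewrite laplacianM laplacian_linf mul0r add0r; congr (2%:R * _ + _).
by apply: eq_bigr => i _; rewrite mderiv_linf.
Qed.

Lemma laplacian_sqnormM p :
  laplacian (sqnorm * p) = (2 * n)%:R * p + 4%:R * euler p + sqnorm * laplacian p.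
Proof.
rewrite laplacianM laplacian_sqnorm; congr (_ + _ + _).
rewrite /vderiv !mulr_sumr; apply: eq_bigr => i _; rewrite mderiv_sqnorm; ring.
Qed.

End DifferentialOperators.

Arguments sqnorm {R n}.

Section Fischer.
Variables (R : realDomainType) (n : nat).
Local Notation P := {mpoly R[n]}.

Fixpoint fischer (k : nat) (p q : P) : R :=
  if k is k'.+1 then \sum_i fischer k' p^`M(i) q^`M(i)
  else p.@[fun=> 0] * q.@[fun=> 0].

Lemma fischerS k p q : fischer k.+1 p q = \sum_i fischer k p^`M(i) q^`M(i).
Proof. by []. Qed.

Lemma fischerC k p q : fischer k p q = fischer k q p.
Proof.
elim: k p q => [|k IH] p q /=; first by rewrite mulrC.
by apply: eq_bigr => i _; rewrite IH.
Qed.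

Lemma fischerDl k p q r : fischer k (p + q) r = fischer k p r + fischer k q r.
Proof.
elim: k p q r => [|k IH] p q r /=; first by rewrite mevalD mulrDl.
by rewrite -big_split; apply: eq_bigr => i _ /=; rewrite mderivD IH.
Qed.

Lemma fischer_mulCl k c p r : fischer k (c%:MP * p) r = c * fischer k p r.
Proof.
elim: k p r => [|k IH] p r /=; first by rewrite mevalM mevalC mulrA.
by rewrite mulr_sumr; apply: eq_bigr => i _ /=; rewrite mderiv_mulC IH.
Qed.

Lemma fischer0l k r : fischer k 0 r = 0.
Proof. by rewrite -(mul0r 0) -mpolyC0 fischer_mulCl mul0r. Qed.

Lemma fischerNl k p r : fischer k (- p) r = - fischer k p r.
Proof. by rewrite -mulN1r -mpolyC1 -mpolyCN fischer_mulCl mulN1r. Qed.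

Lemma fischer_suml k (I : finType) (F : I -> P) r :
  fischer k (\sum_i F i) r = \sum_i fischer k (F i) r.
Proof.
apply: (big_morph (fun p => fischer k p r)); last exact: fischer0l.
by move=> ? ?; exact: fischerDl.
Qed.

Lemma fischerDr k p q r : fischer k r (p + q) = fischer k r p + fischer k r q.
Proof. by rewrite !(fischerC k r) fischerDl. Qed.

Lemma fischer_mulCr k c p r : fischer k r (c%:MP * p) = c * fischer k r p.
Proof. by rewrite !(fischerC k r) fischer_mulCl. Qed.

Lemma fischer0r k r : fischer k r 0 = 0.
Proof. by rewrite fischerC fischer0l. Qed.

Lemma fischer_sumr k (I : finType) (F : I -> P) r :
  fischer k r (\sum_i F i) = \sum_i fischer k r (F i).
Proof. by rewrite fischerC fischer_suml; apply: eq_bigr => i _; rewrite fischerC. Qed.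

Lemma fischer_ge0 k p : 0 <= fischer k p p.
Proof.
elim: k p => [|k IH] p /=; first by rewrite -expr2 sqr_ge0.
exact: sumr_ge0.
Qed.

Lemma fischer_Xl i k p q : fischer k.+1 ('X_i * p) q = k.+1%:R * fischer k p q^`M(i).
Proof.
have fischer0X j r s : fischer 0 ('X_j * r) s = 0 by rewrite /= mevalM mevalXU !mul0r.
elim: k p q => [|k IH] p q; rewrite fischerS.
  under eq_bigr => j _ do rewrite mderivM mderivXU fischerDl -mpolyC_nat.
  under eq_bigr => j _ do rewrite fischer_mulCl fischer0X addr0.
  by rewrite sum_delta mul1r.
under eq_bigr => j _ do rewrite mderivM mderivXU fischerDl -mpolyC_nat fischer_mulCl IH.
rewrite big_split /= sum_delta -mulr_sumr.
have -> : \sum_j fischer k p^`M(j) q^`M(j)^`M(i) = fischer k.+1 p q^`M(i).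
  by rewrite fischerS; apply: eq_bigr => j _; rewrite mderiv_comm.
by rewrite -fischerS -[k.+2]addn1 natrD; ring.
Qed.

Lemma fischer_sqnorml k r H : laplacian H = 0 -> fischer k (sqnorm * r) H = 0.
Proof.
move=> harmH; rewrite /sqnorm mulr_suml fischer_suml.
case: k => [|k]; first by rewrite big1 // => i _; rewrite /= -mulrA mevalM mevalXU !mul0r.
under eq_bigr => i _ do rewrite -mulrA fischer_Xl.
case: k => [|k]; first by rewrite big1 // => i _; rewrite /= mevalM mevalXU !mul0r mulr0.
under eq_bigr => i _ do rewrite fischer_Xl.
by rewrite -mulr_sumr -mulr_sumr -fischer_sumr -/(laplacian H) harmH fischer0r !mulr0.
Qed.

End Fischer.

Section Reproducing.
Variables (R : realDomainType) (n : nat) (y : 'I_n -> R).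
Local Notation P := {mpoly R[n]}.

(* This holds for every p homogeneous of degree m; the closure lemmas below give
   it for the polynomials we need. *)
Definition reproduces_at (m : nat) (p : P) : Prop :=
  fischer m (linf y ^+ m) p = (m`!%:R) ^+ 2 * p.@[y].

Lemma reproduces_at1 : reproduces_at 0 1.
Proof. by rewrite /reproduces_at expr0 /= !meval1 fact0 expr1n !mulr1. Qed.

Lemma reproduces_atXl m i p : reproduces_at m p -> reproduces_at m.+1 ('X_i * p).
Proof.
rewrite /reproduces_at => rep_p.
rewrite fischerC fischer_Xl mderiv_exp mderiv_linf -mpolyC_nat fischer_mulCr.
rewrite [_ * _%:MP]mulrC fischer_mulCr fischerC rep_p mevalM mevalXU factS natrM; ring.
Qed.

Lemma reproduces_atD m p q :
  reproduces_at m p -> reproduces_at m q -> reproduces_at m (p + q).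
Proof.
by rewrite /reproduces_at => rep_p rep_q; rewrite fischerDr rep_p rep_q mevalD mulrDr.
Qed.

Lemma reproduces_at_mulC m c p : reproduces_at m p -> reproduces_at m (c%:MP * p).
Proof.
by rewrite /reproduces_at => rep_p; rewrite fischer_mulCr rep_p mevalM mevalC mulrCA.
Qed.

Lemma reproduces_atN m p : reproduces_at m p -> reproduces_at m (- p).
Proof.
by rewrite /reproduces_at => rep_p; rewrite fischerC fischerNl fischerC rep_p mevalN mulrN.
Qed.

Lemma reproduces_at_sum m (I : finType) (F : I -> P) :
  (forall i, reproduces_at m (F i)) -> reproduces_at m (\sum_i F i).
Proof.
move=> rep_F; elim/big_ind: _ => //; last exact: reproduces_atD.
by rewrite /reproduces_at fischer0r meval0 mulr0.
Qed.

End Reproducing.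

Section Zonal.
Variables (R : realType) (n : nat).
Local Notation P := {mpoly R[n]}.

(* The recurrence of [gegen_pair] reads
   P_(k+2) = (gegen_a k * t * P_(k+1) - (k + 1) * P_k) / gegen_b k. *)
Definition gegen_a (k : nat) : R := (2 * k.+1)%:R + n%:R - 2.
Definition gegen_b (k : nat) : R := k.+1%:R + n%:R - 2.

(* [zonal_pair v k] = (|x|^k P_k(v.x/|x|), |x|^(k+1) P_(k+1)(v.x/|x|)): in the
   recurrence t becomes v.x and the older term is multiplied by |x|^2. *)
Fixpoint zonal_pair (v : 'I_n -> R) (k : nat) : P * P :=
  if k is k'.+1 then
    let z := zonal_pair v k' in
    (z.2, (gegen_b k')^-1%:MP *
            ((gegen_a k')%:MP * (linf v * z.2) - k'.+1%:R%:MP * (sqnorm * z.1)))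
  else (1, linf v).

Definition zonal (v : 'I_n -> R) (k : nat) : P := (zonal_pair v k).1.

Lemma zonal_pair_sphere v w k : sqnorm.@[w] = 1 ->
  ((zonal_pair v k).1.@[w], (zonal_pair v k).2.@[w]) = gegen_pair n k (linf v).@[w].
Proof.
move=> w1; elim: k => [|k IH] /=; first by rewrite meval1.
rewrite -IH /=; congr pair.
rewrite !(mevalM, mevalB, mevalC) w1 /gegen_a /gegen_b; ring.
Qed.

Lemma zonal_sphere v w k : \sum_i w i * w i = 1 ->
  (zonal v k).@[w] = gegen n k (\sum_i v i * w i).
Proof. by move=> w1; rewrite /gegen -meval_linf -zonal_pair_sphere ?meval_sqnorm. Qed.

Lemma zonal_pair_reproduces y v k :
  reproduces_at y k (zonal_pair v k).1 /\ reproduces_at y k.+1 (zonal_pair v k).2.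
Proof.
have rep_linf m p : reproduces_at y m p -> reproduces_at y m.+1 (linf v * p).
  move=> rep_p; rewrite /linf mulr_suml; apply: reproduces_at_sum => i.
  by rewrite -mulrA; apply/reproduces_at_mulC/reproduces_atXl.
elim: k => [|k [rep1 rep2]] /=.
  split; first exact: reproduces_at1.
  by rewrite -[linf v]mulr1; exact/rep_linf/reproduces_at1.
split=> //; apply/reproduces_at_mulC/reproduces_atD.
  exact/reproduces_at_mulC/rep_linf.
apply/reproduces_atN/reproduces_at_mulC.
by rewrite /sqnorm mulr_suml; apply: reproduces_at_sum => i; rewrite -mulrA;
  apply/reproduces_atXl/reproduces_atXl.
Qed.

Hypothesis n_ge2 : (2 <= n)%N.

Lemma gegen_a_gt0 k : 0 < gegen_a k.
Proof. by rewrite /gegen_a -natrD -[2]/(2%:R) -natrB ?ltr0n; lia. Qed.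

Lemma gegen_b_gt0 k : 0 < gegen_b k.
Proof. by rewrite /gegen_b -natrD -[2]/(2%:R) -natrB ?ltr0n; lia. Qed.

Lemma zonal_pair_decomp k : exists c : R * R, [/\ 0 < c.1, 0 < c.2 &
  forall v, exists r : P * P,
    (zonal_pair v k).1 = c.1%:MP * linf v ^+ k + sqnorm * r.1 /\
    (zonal_pair v k).2 = c.2%:MP * linf v ^+ k.+1 + sqnorm * r.2].
Proof.
elim: k => [|k [c [c1_gt0 c2_gt0 dec]]].
  exists (1, 1); split=> // v; exists (0, 0).
  by rewrite /= !mulr0 !addr0 mpolyC1 expr0 expr1 !mul1r.
exists (c.2, (gegen_b k)^-1 * gegen_a k * c.2); split=> //.
  by rewrite !mulr_gt0 ?invr_gt0 ?gegen_a_gt0 ?gegen_b_gt0.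
move=> v; have [r [_ dec2]] := dec v.
exists (r.2, (gegen_b k)^-1%:MP *
  ((gegen_a k)%:MP * (linf v * r.2) - k.+1%:R%:MP * (zonal_pair v k).1)).
split=> //=; rewrite {1}dec2 !rmorphM !exprS; ring.
Qed.

Section Harmonic.
Variable u : 'I_n -> R.
Hypothesis u_unit : \sum_i u i * u i = 1.

(* The last two clauses only serve to carry the induction. *)
Definition zonal_invariant k (a b : P) :=
  [/\ euler a = k%:R * a, euler b = k.+1%:R * b, laplacian a = 0 /\ laplacian b = 0,
      dirderiv u b = k.+1%:R * a &
      sqnorm * dirderiv u a =
        ((2 * k)%:R + n%:R - 2) * (linf u * a) - (k%:R + n%:R - 2) * b].

Lemma zonal_pair_invariant k : zonal_invariant k (zonal_pair u k).1 (zonal_pair u k).2.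
Proof.
have dLu : dirderiv u (linf u) = 1 by rewrite dirderiv_linf u_unit mpolyC1.
elim: k => [|k IH].
  rewrite /zonal_invariant /= euler_linf laplacian1 laplacian_linf dLu !vderiv1 mulr0.
  by split=> //; ring.
rewrite [zonal_pair u k.+1]/=.
move: IH; set a := (zonal_pair u k).1; set b := (zonal_pair u k).2.
case=> Ea Eb [La Lb] Db Qda.
set w := (gegen_a k)%:MP * (linf u * b) - k.+1%:R%:MP * (sqnorm * a).
have aE : (gegen_a k)%:MP = (2 * k.+1)%:R + n%:R - 2 :> P.
  by rewrite /gegen_a rmorphB rmorphD !rmorph_nat.
have bE : (gegen_b k)%:MP = k.+1%:R + n%:R - 2 :> P.
  by rewrite /gegen_b rmorphB rmorphD !rmorph_nat.
have bK (X : P) : (gegen_b k)^-1%:MP * ((gegen_b k)%:MP * X) = X.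
  by rewrite mulrA -rmorphM mulVf ?gt_eqF ?gegen_b_gt0 // rmorph1 mul1r.
split=> //=.
- rewrite vderiv_mulC /w vderivD vderivN !vderiv_mulC !vderivM.
  rewrite euler_linf euler_sqnorm Ea Eb aE mpolyC_nat; ring.
- split=> //; rewrite laplacian_mulC /w laplacianD laplacianN !laplacian_mulC.
  rewrite laplacian_linfM laplacian_sqnormM La Lb Db Ea aE mpolyC_nat; ring.
- rewrite vderiv_mulC /w vderivD vderivN !vderiv_mulC !vderivM.
  rewrite dLu dirderiv_sqnorm Db Qda -[in RHS](bK (k.+2%:R * b)); congr (_ * _).
  rewrite bE aE mpolyC_nat; ring.
- rewrite Db -bE (mulrA (gegen_b k)%:MP) -rmorphM mulfV ?gt_eqF ?gegen_b_gt0 //.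
  by rewrite rmorph1 mul1r /w aE mpolyC_nat; ring.
Qed.

Lemma zonal_harmonic k : laplacian (zonal u k) = 0.
Proof. by case: (zonal_pair_invariant k) => _ _ []. Qed.

End Harmonic.

Lemma fischer_zonal k : exists2 c : R, 0 < c & forall u w : 'I_n -> R,
  \sum_i u i * u i = 1 -> \sum_i w i * w i = 1 ->
  fischer k (zonal u k) (zonal w k) = c * gegen n k (\sum_i u i * w i).
Proof.
have [[c1 c2] [/= c1_gt0 _ dec]] := zonal_pair_decomp k.
exists (c1 * k`!%:R ^+ 2); first by rewrite mulr_gt0 ?exprn_gt0 ?ltr0n ?fact_gt0.
move=> u w u1 w1; have [r [zu _]] := dec u.
rewrite /zonal zu.
rewrite fischerDl fischer_mulCl fischer_sqnorml ?zonal_harmonic // addr0.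
have [-> _] := zonal_pair_reproduces u w k.
rewrite zonal_sphere // mulrA; congr (_ * gegen n k _).
by apply: eq_bigr => i _; rewrite mulrC.
Qed.

Lemma gegen_gram_ge0 N k (y : 'I_N -> 'rV[R]_n) : (forall i, on_sphere (y i)) ->
  0 <= \sum_i \sum_j gegen n k (dotp (y i) (y j)).
Proof.
move=> y1; have [c c_gt0 fz] := fischer_zonal k.
have := fischer_ge0 k (\sum_i zonal (fun l => y i 0 l) k).
rewrite fischer_suml; under eq_bigr => i _ do rewrite fischer_sumr.
under eq_bigr => i _ do under eq_bigr => j _ do rewrite (fz _ _ (y1 i) (y1 j)).
under eq_bigr => i _ do rewrite -mulr_sumr.
by rewrite -mulr_sumr pmulr_rge0.
Qed.

End Zonal.

Section Sphere.
Variables (R : realType) (n : nat).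
Implicit Types (u v : 'rV[R]_n).

Lemma dotpC u v : dotp u v = dotp v u.
Proof. by apply: eq_bigr => l _; rewrite mulrC. Qed.

Lemma dotp_ge0 u : 0 <= dotp u u.
Proof. by apply: sumr_ge0 => l _; rewrite -expr2 sqr_ge0. Qed.

Lemma dotpDD u v : dotp (u + v) (u + v) = dotp u u + dotp v v + 2 * dotp u v.
Proof.
rewrite /dotp mulr_sumr -!big_split; apply: eq_bigr => l _ /=.
by rewrite !mxE; ring.
Qed.

Lemma dotpBB u v : dotp (u - v) (u - v) = dotp u u + dotp v v - 2 * dotp u v.
Proof.
rewrite /dotp mulr_sumr -big_split -sumrB; apply: eq_bigr => l _ /=.
by rewrite !mxE; ring.
Qed.

Lemma dist2_sphere u v : on_sphere u -> on_sphere v ->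
  dist2 u v = Num.sqrt (2 - 2 * dotp u v).
Proof. by move=> u1 v1; rewrite /dist2 dotpBB u1 v1. Qed.

Lemma sphere_dotp_ge u v : on_sphere u -> on_sphere v -> -1 <= dotp u v.
Proof. by move=> u1 v1; have := dotp_ge0 (u + v); rewrite dotpDD u1 v1; lra. Qed.

Lemma sphere_dotp_le u v : on_sphere u -> on_sphere v -> dotp u v <= 1.
Proof. by move=> u1 v1; have := dotp_ge0 (u - v); rewrite dotpBB u1 v1; lra. Qed.

Section Delsarte.
Variables (N k : nat) (c : nat -> R) (y : 'I_N -> 'rV[R]_n).
Hypotheses (n_ge2 : (2 <= n)%N) (y1 : forall i, on_sphere (y i))
  (c_ge0 : forall i, (1 <= i <= k)%N -> 0 <= c i).
Local Notation f := (gegen_sum n k c).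

Lemma delsarte_sum_ge : c 0%N * N%:R ^+ 2 <= \sum_i \sum_j f (dotp (y i) (y j)).
Proof.
have -> : \sum_i \sum_j f (dotp (y i) (y j)) =
    \sum_(l < k.+1) c l * \sum_i \sum_j gegen n l (dotp (y i) (y j)).
  rewrite /gegen_sum; under eq_bigr => i _ do rewrite exchange_big.
  rewrite exchange_big; apply: eq_bigr => l _.
  by rewrite mulr_sumr; apply: eq_bigr => i _; rewrite mulr_sumr.
rewrite big_ord_recl /= {1}/gegen /= !sumr_const !card_ord.
have -> : N%:R *+ N = N%:R ^+ 2 :> R by rewrite -mulr_natr expr2.
rewrite lerDl; apply: sumr_ge0 => l _.
apply: mulr_ge0; last exact: gegen_gram_ge0.
by apply: c_ge0; rewrite /bump /=; have := ltn_ord l; lia.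
Qed.

Lemma delsarte_offdiag_ge :
  N%:R * (N%:R * c 0%N - f 1) <= \sum_i \sum_(j | j != i) f (dotp (y i) (y j)).
Proof.
have := delsarte_sum_ge.
under eq_bigr => i _ do rewrite (bigD1 i) //= y1.
by rewrite big_split /= sumr_const card_ord -mulr_natl; lra.
Qed.

Lemma delsarte_bound : (0 < N)%N -> 0 < c 0%N ->
  (forall i j, j != i -> f (dotp (y i) (y j)) <= 0) -> N%:R <= fsharp n k c.
Proof.
move=> N_gt0 c0_gt0 f_le0.
have off_le0 : \sum_i \sum_(j | j != i) f (dotp (y i) (y j)) <= 0.
  by apply: sumr_le0 => i _; apply: sumr_le0 => j; exact: f_le0.
have := le_trans delsarte_offdiag_ge off_le0.
rewrite pmulr_rle0 ?ltr0n // subr_le0 => le_f1.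
by rewrite /fsharp ler_pdivlMr.
Qed.

Lemma delsarte_tight : N%:R = fsharp n k c -> 0 < c 0%N ->
  (forall i j, j != i -> f (dotp (y i) (y j)) <= 0) ->
  forall i j, j != i -> f (dotp (y i) (y j)) = 0.
Proof.
move=> N_eq c0_gt0 f_le0 i j ji.
have f1 : f 1 = N%:R * c 0%N by rewrite N_eq /fsharp divfK ?gt_eqF.
have := delsarte_offdiag_ge; rewrite f1 subrr mulr0 pair_big_dep /= -oppr_le0 -sumrN.
move=> off_ge0.
have nonneg (p : 'I_N * 'I_N) : p.2 != p.1 -> 0 <= - f (dotp (y p.1) (y p.2)).
  by move=> ?; rewrite oppr_ge0 f_le0.
have off0 : \sum_(p | p.2 != p.1) - f (dotp (y p.1) (y p.2)) = 0.
  by apply/eqP; rewrite eq_le off_ge0 sumr_ge0.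
by apply/eqP; rewrite -oppr_eq0 (psumr_eq0P nonneg off0 (i := (i, j))).
Qed.

End Delsarte.

Lemma exists_pair_dotp_ge N (y : 'I_N -> 'rV[R]_n) t k1 c t2 K2 e :
  (2 <= n)%N -> (0 < N)%N -> (forall i, on_sphere (y i)) ->
  inP k1 t n c -> N%:R = fsharp n k1 c ->
  (forall s, t2 < s < t -> gegen_sum n k1 c s != 0) ->
  inP K2 t2 n e -> fsharp n K2 e < N%:R ->
  exists i j : 'I_N, (i < j)%N /\ t <= dotp (y i) (y j).
Proof.
move=> n_ge2 N_gt0 y1 [_ c0_gt0 c_ge0 f_le0] N_eq f_ne0 [_ e0_gt0 e_ge0 g_le0] lt_N.
apply: contrapT => no_pair.
have lt_t i j : j != i -> dotp (y i) (y j) < t.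
  move=> ji; rewrite ltNge; apply/negP => le_t; apply: no_pair.
  case: (ltngtP i j) => [ij | ji' | /val_inj eq_ij]; first by exists i, j.
    by exists j, i; rewrite dotpC.
  by rewrite eq_ij eqxx in ji.
have f_off_le0 i j : j != i -> gegen_sum n k1 c (dotp (y i) (y j)) <= 0.
  by move=> ji; apply: f_le0; rewrite sphere_dotp_ge //= (ltW (lt_t i j ji)).
have f_off0 := delsarte_tight n_ge2 y1 c_ge0 N_eq c0_gt0 f_off_le0.
have le_t2 i j : j != i -> dotp (y i) (y j) <= t2.
  move=> ji; rewrite leNgt; apply/negP => gt_t2.
  by have := f_ne0 (dotp (y i) (y j)); rewrite gt_t2 lt_t // f_off0 // eqxx => /(_ isT).
suff : N%:R <= fsharp n K2 e by rewrite leNgt lt_N.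
apply: delsarte_bound => // i j ji.
by apply: g_le0; rewrite sphere_dotp_ge ?le_t2.
Qed.

Lemma min_dist_le N (y : 'I_N -> 'rV[R]_n) (i j : 'I_N) :
  (i < j)%N -> min_dist y <= dist2 (y i) (y j).
Proof.
move=> ij; apply: ge_inf; last by exists i, j.
by exists 0 => r [i' [j' [_ ->]]]; exact: sqrtr_ge0.
Qed.

Lemma dotp_le_max_inner N (x : 'I_N -> 'rV[R]_n) (i j : 'I_N) :
  (forall i, on_sphere (x i)) -> (i < j)%N -> dotp (x i) (x j) <= max_inner x.
Proof.
move=> x1 ij; apply: sup_upper_bound; last by exists i, j.
split; first by exists (dotp (x i) (x j)), i, j.
by exists 1 => r [i' [j' [_ ->]]]; exact: sphere_dotp_le.
Qed.

Lemma sqrt_max_inner_le_min_dist N (x : 'I_N -> 'rV[R]_n) : (2 <= N)%N ->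
  (forall i, on_sphere (x i)) -> Num.sqrt (2 - 2 * max_inner x) <= min_dist x.
Proof.
move=> N_ge2 x1; apply: lb_le_inf.
  pose i0 : 'I_N := Ordinal (ltnW N_ge2); pose i1 : 'I_N := Ordinal N_ge2.
  by exists (dist2 (x i0) (x i1)), i0, i1.
move=> r [i [j [ij ->]]]; rewrite dist2_sphere // ler_wsqrtr //.
by have := dotp_le_max_inner x1 ij; lra.
Qed.

Lemma tammes_d_attained N (x : 'I_N -> 'rV[R]_n) : (forall i, on_sphere (x i)) ->
  (forall y : 'I_N -> 'rV[R]_n,
     (forall i, on_sphere (y i)) -> min_dist y <= min_dist x) ->
  tammes_d R n N = min_dist x.
Proof.
move=> x1 x_max; have ne : ([set r | exists y : 'I_N -> 'rV[R]_n,
    (forall i, on_sphere (y i)) /\ r = min_dist y] !=set0)%classic.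
  by exists (min_dist x), x.
apply/le_anti/andP; split; first by apply: ge_sup => // r [y [y1 ->]]; exact: x_max.
apply: sup_upper_bound; last by exists x.
by split=> //; exists (min_dist x) => r [y [y1 ->]]; exact: x_max.
Qed.

End Sphere.

Theorem theorem3p1 (R : realType) (n N : nat) (x : 'I_N -> 'rV[R]_n) :
  (2 <= n)%N -> (2 <= N)%N ->
  injective x ->
  (forall i, on_sphere (x i)) ->
  (* (i) *)
  forall (k1 : nat) (c : nat -> R),
  inP k1 (max_inner x) n c ->
  N%:R = fsharp n k1 c ->
  (* (ii) *)
  forall t2 : R, -1 <= t2 < max_inner x ->
  (forall t : R, t2 < t < max_inner x -> gegen_sum n k1 c t != 0) ->
  (* (iii) *)
  forall (K2 : nat) (e : nat -> R),
  inP K2 t2 n e ->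
  fsharp n K2 e < N%:R ->
  tammes_d R n N = min_dist x.
Proof.
move=> n_ge2 N_ge2 _ x1 k1 c f_in N_eq t2 _ f_ne0 K2 e g_in lt_N.
apply: tammes_d_attained => // y y1.
have [i [j [ij le_dotp]]] :=
  exists_pair_dotp_ge n_ge2 (ltnW N_ge2) y1 f_in N_eq f_ne0 g_in lt_N.
apply: le_trans (min_dist_le y ij) (le_trans _ (sqrt_max_inner_le_min_dist N_ge2 x1)).
by rewrite dist2_sphere // ler_wsqrtr //; lra.
Qed.
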